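(* Let $\omega\ge0$ and let $\mathcal{T}$ be the scheme on $\mathcal{M}$ defined by $$\mathcal{T}(\mathbf{p})_{2i}=p_i,\qquad \mathcal{T}(\mathbf{p})_{2i+1}=M_{1/2}\big(M_{-2\omega}(p_i,p_{i-1}),\,M_{-2\omega}(p_{i+1},p_{i+2})\big),\quad i\in\mathbb{Z}.$$ Then $\delta(\mathcal{T}(\mathbf{p}))\le(4\omega+\tfrac12)\,\delta(\mathbf{p})$ for all manifold data $\mathbf{p}$. Consequently, for $0\le\omega<\tfrac18$ the scheme has a contractivity factor $\mu=4\omega+\tfrac12<1$ and is convergent (in particular for $\omega=\tfrac1{16}$, with $\mu=\tfrac34$).
   Context: $\mathcal{M}$ is a geodesically complete connected Riemannian manifold with distance $d$. $M_t(p_0,p_1)$ is the geodesic average: the point at parameter $t$ on a fixed minimal geodesic $\gamma$ with $\gamma(0)=p_0,\gamma(1)=p_1$, extended beyond $[0,1]$ for $t$ near $[0,1]$ (assumed defined for $t=-2\omega$), satisfying $d(p_0,M_t(p_0,p_1))=|t|d(p_0,p_1)$ and $d(M_t(p_0,p_1),p_1)=|1-t|d(p_0,p_1)$. Data $\mathbf{p}=(p_i)_{i\in\mathbb{Z}}$, $\delta(\mathbf{p})=\sup_id(p_i,p_{i+1})<\infty$. This scheme is the adaptation (via the symmetric geodesic inductive mean) of the linear 4-point scheme $f_{2i}\mapsto f_i$, $f_{2i+1}\mapsto-\omega(f_{i-1}+f_{i+2})+(\tfrac12+\omega)(f_i+f_{i+1})$. Convergence means: for every data $\mathbf{p}$ the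 curves $\mathrm{PG}_k(\mathcal{T}^k(\mathbf{p}))$ converge uniformly on $\mathbb{R}$, where $\mathrm{PG}_k(\mathbf{q})(t)=M_{2^kt-n}(q_n,q_{n+1})$ for $t\in[2^{-k}n,2^{-k}(n+1))$. *)

From Stdlib Require Import Reals ZArith.
Open Scope R_scope.

Definition is_metric {P : Type} (d : P -> P -> R) : Prop :=
  (forall x y, 0 <= d x y) /\
  (forall x y, d x y = 0 <-> x = y) /\
  (forall x y, d x y = d y x) /\
  (forall x y z, d x z <= d x y + d y z).

(* Completeness of the metric (Cauchy sequences converge). For a geodesically
   complete connected Riemannian manifold this holds by Hopf–Rinow. *)
Definition complete_metric {P : Type} (d : P -> P -> R) : Prop :=
  forall u : nat -> P,
    (forall eps, eps > 0 -> exists N : nat, forall m n : nat,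
        (N <= m)%nat -> (N <= n)%nat -> d (u m) (u n) < eps) ->
    exists l : P, forall eps, eps > 0 -> exists N : nat, forall n : nat,
        (N <= n)%nat -> d (u n) l < eps.

(* Geodesic average M t p0 p1 = gamma(t) on a fixed minimal geodesic from p0 to
   p1, with the distance identities for t in [0,1] and for t = -2 omega. *)
Definition geodesic_average {P : Type} (d : P -> P -> R)
    (M : R -> P -> P -> P) (omega : R) : Prop :=
  forall (p0 p1 : P) (t : R), (0 <= t <= 1 \/ t = - (2 * omega)) ->
    d p0 (M t p0 p1) = Rabs t * d p0 p1 /\
    d (M t p0 p1) p1 = Rabs (1 - t) * d p0 p1.

Definition data (P : Type) := Z -> P.

Definition disp {P : Type} (d : P -> P -> R) (p : data P) : R -> Prop :=
  fun x => exists i : Z, x = d (p i) (p (i + 1)%Z).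

Definition is_delta {P : Type} (d : P -> P -> R) (p : data P) (r : R) : Prop :=
  is_lub (disp d p) r.

Definition bounded_data {P : Type} (d : P -> P -> R) (p : data P) : Prop :=
  exists B : R, forall i : Z, d (p i) (p (i + 1)%Z) <= B.

(* The scheme T: T(p)_{2i} = p_i,
   T(p)_{2i+1} = M_{1/2}(M_{-2w}(p_i,p_{i-1}), M_{-2w}(p_{i+1},p_{i+2})).
   Z.div floors, so for j = 2i+1, j/2 = i. *)
Definition T4 {P : Type} (M : R -> P -> P -> P) (omega : R) (p : data P) : data P :=
  fun j : Z =>
    let i := (j / 2)%Z in
    if Z.even j then p i
    else M (1/2) (M (- (2 * omega)) (p i) (p (i - 1)%Z))
                 (M (- (2 * omega)) (p (i + 1)%Z) (p (i + 2)%Z)).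

Definition Titer {P : Type} (M : R -> P -> P -> P) (omega : R) (k : nat)
    (p : data P) : data P := Nat.iter k (T4 M omega) p.

(* PG_k(q)(t) = M_{2^k t - n}(q_n, q_{n+1}) for t in [2^-k n, 2^-k (n+1)),
   i.e. n = floor(2^k t) (Int_part is the floor). *)
Definition PG {P : Type} (M : R -> P -> P -> P) (k : nat) (q : data P) (t : R) : P :=
  let s := 2 ^ k * t in
  let n := Int_part s in
  M (s - IZR n) (q n) (q (n + 1)%Z).

Definition convergent {P : Type} (d : P -> P -> R) (M : R -> P -> P -> P)
    (omega : R) : Prop :=
  forall p : data P, bounded_data d p ->
    exists g : R -> P, forall eps, eps > 0 -> exists K : nat,
      forall (k : nat) (t : R), (K <= k)%nat ->
        d (PG M k (Titer M omega k p) t) (g t) < eps.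

From Stdlib Require Import Reals ZArith Lia Lra ClassicalEpsilon.
Open Scope R_scope.

(* Each new point is the midpoint of two extrapolants lying within 2ωδ of
   p_i and of p_{i+1}; hence it lies within (4ω + 1/2)δ of both neighbours,
   and δ contracts by μ = 4ω + 1/2.  Since T keeps the even points, the
   piecewise-geodesic curves PG_k(T^k p) and PG_{k+1}(T^{k+1} p) stay within
   (1 + 2μ)μ^k δ(p) of each other, so for μ < 1 they form a uniformly Cauchy
   sequence, which converges uniformly because the metric is complete. *)

Definition delta_le {P : Type} (d : P -> P -> R) (q : data P) (B : R) : Prop :=
  forall i : Z, d (q i) (q (i + 1)%Z) <= B.

Lemma T4_even {P : Type} (M : R -> P -> P -> P) omega (q : data P) n :
  T4 M omega q (2 * n)%Z = q n.
Proof.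
  unfold T4. replace (2 * n / 2)%Z with n by (Z.div_mod_to_equations; lia).
  now rewrite Z.even_mul.
Qed.

Lemma T4_odd {P : Type} (M : R -> P -> P -> P) omega (q : data P) n :
  T4 M omega q (2 * n + 1)%Z =
  M (1/2) (M (- (2 * omega)) (q n) (q (n - 1)%Z))
          (M (- (2 * omega)) (q (n + 1)%Z) (q (n + 2)%Z)).
Proof.
  unfold T4. replace ((2 * n + 1) / 2)%Z with n by (Z.div_mod_to_equations; lia).
  now rewrite Z.even_add, Z.even_mul.
Qed.

Lemma Int_part_double s :
  Int_part (2 * s) = (2 * Int_part s)%Z \/ Int_part (2 * s) = (2 * Int_part s + 1)%Z.
Proof.
  destruct (base_Int_part s) as [Hs1 Hs2].
  destruct (base_Int_part (2 * s)) as [H2s1 H2s2].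
  assert (Hlo : (2 * Int_part s - 1 < Int_part (2 * s))%Z).
  { apply lt_IZR. rewrite minus_IZR, mult_IZR. simpl. lra. }
  assert (Hhi : (Int_part (2 * s) < 2 * Int_part s + 2)%Z).
  { apply lt_IZR. rewrite plus_IZR, mult_IZR. simpl. lra. }
  lia.
Qed.

Lemma geometric_eventually_lt mu D eps :
  0 <= mu < 1 -> 0 <= D -> 0 < eps ->
  exists N : nat, forall n : nat, (N <= n)%nat -> D * mu ^ n < eps.
Proof.
  intros Hmu HD Heps.
  assert (Hy : 0 < eps / (D + 1)) by (apply Rdiv_lt_0_compat; lra).
  destruct (pow_lt_1_zero mu ltac:(rewrite Rabs_right; lra) _ Hy) as [N HN].
  exists N. intros n Hn. specialize (HN n Hn).
  assert (Hpow : 0 <= mu ^ n) by (apply pow_le; lra).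
  rewrite Rabs_right in HN by lra.
  apply (Rmult_lt_compat_l (D + 1)) in HN; [|lra].
  replace ((D + 1) * (eps / (D + 1))) with eps in HN by (field; lra).
  nra.
Qed.

Section Metric.
Context {P : Type} (d : P -> P -> R) (Hd : is_metric d).

Lemma dist_ge0 x y : 0 <= d x y.
Proof. apply Hd. Qed.

Lemma dist_xx x : d x x = 0.
Proof. now apply Hd. Qed.

Lemma dist_sym x y : d x y = d y x.
Proof. apply Hd. Qed.

Lemma dist_triangle x y z : d x z <= d x y + d y z.
Proof. apply Hd. Qed.

Lemma delta_le_ge0 q B : delta_le d q B -> 0 <= B.
Proof. intros HB. pose proof (HB 0%Z). pose proof (dist_ge0 (q 0%Z) (q (0 + 1)%Z)). lra. Qed.

Lemma is_delta_delta_le q r : is_delta d q r -> delta_le d q r.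
Proof. intros [Hub _] i. apply Hub. now exists i. Qed.

Lemma is_delta_exists_le q B : delta_le d q B -> exists r, is_delta d q r /\ r <= B.
Proof.
  intros HB.
  assert (Hbound : bound (disp d q)) by (exists B; intros x [i ->]; apply HB).
  assert (Hne : exists x, disp d q x) by (eexists; now exists 0%Z).
  destruct (completeness _ Hbound Hne) as [r Hr].
  exists r. split; [exact Hr|]. apply Hr. intros x [i ->]. apply HB.
Qed.

Section GeodesicAverage.
Context (M : R -> P -> P -> P) (omega : R).
Hypothesis HM : geodesic_average d M omega.
Hypothesis Homega : 0 <= omega.

Lemma dist_interpolant_le t p0 p1 : 0 <= t <= 1 -> d p0 (M t p0 p1) <= d p0 p1.
Proof.
  intros Ht. rewrite (proj1 (HM p0 p1 t (or_introl Ht))), Rabs_right by lra.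
  pose proof (dist_ge0 p0 p1). nra.
Qed.

Lemma dist_midpoint_l a b : d a (M (1/2) a b) = d a b / 2.
Proof.
  rewrite (proj1 (HM a b (1/2) ltac:(left; lra))), Rabs_right by lra. lra.
Qed.

Lemma dist_midpoint_r a b : d (M (1/2) a b) b = d a b / 2.
Proof.
  rewrite (proj2 (HM a b (1/2) ltac:(left; lra))), Rabs_right by lra. lra.
Qed.

Lemma dist_extrapolant p0 p1 : d p0 (M (- (2 * omega)) p0 p1) = 2 * omega * d p0 p1.
Proof.
  rewrite (proj1 (HM p0 p1 _ (or_intror eq_refl))), Rabs_Ropp, Rabs_right by lra.
  reflexivity.
Qed.

Lemma T4_odd_dist_le q B n : delta_le d q B ->
  d (q n) (T4 M omega q (2 * n + 1)%Z) <= (4 * omega + 1/2) * B /\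
  d (T4 M omega q (2 * n + 1)%Z) (q (n + 1)%Z) <= (4 * omega + 1/2) * B.
Proof.
  intros HB. rewrite T4_odd.
  set (a := M (- (2 * omega)) (q n) (q (n - 1)%Z)).
  set (b := M (- (2 * omega)) (q (n + 1)%Z) (q (n + 2)%Z)).
  assert (Hqa : d (q n) a <= 2 * omega * B).
  { unfold a. rewrite dist_extrapolant, dist_sym.
    pose proof (HB (n - 1)%Z) as Hstep. replace (n - 1 + 1)%Z with n in Hstep by lia.
    nra. }
  assert (Hqb : d (q (n + 1)%Z) b <= 2 * omega * B).
  { unfold b. rewrite dist_extrapolant.
    pose proof (HB (n + 1)%Z) as Hstep. replace (n + 1 + 1)%Z with (n + 2)%Z in Hstep by lia.
    nra. }
  assert (Hab : d a b <= (4 * omega + 1) * B).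
  { pose proof (HB n).
    pose proof (dist_triangle a (q n) b). pose proof (dist_triangle (q n) (q (n + 1)%Z) b).
    rewrite (dist_sym (q n) a) in Hqa. lra. }
  split.
  - pose proof (dist_triangle (q n) a (M (1/2) a b)). rewrite dist_midpoint_l in *. lra.
  - pose proof (dist_triangle (M (1/2) a b) b (q (n + 1)%Z)).
    rewrite dist_midpoint_r, (dist_sym b) in *. lra.
Qed.

Lemma T4_delta_le q B : delta_le d q B -> delta_le d (T4 M omega q) ((4 * omega + 1/2) * B).
Proof.
  intros HB j.
  destruct (T4_odd_dist_le q B (j / 2) HB) as [Hleft Hright].
  assert (Hj : j = (2 * (j / 2))%Z \/ j = (2 * (j / 2) + 1)%Z) by (Z.div_mod_to_equations; lia).
  destruct Hj as [Hj | Hj]; rewrite Hj.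
  - now rewrite T4_even.
  - replace (2 * (j / 2) + 1 + 1)%Z with (2 * (j / 2 + 1))%Z by lia.
    now rewrite T4_even.
Qed.

Lemma Titer_delta_le p B k :
  delta_le d p B -> delta_le d (Titer M omega k p) ((4 * omega + 1/2) ^ k * B).
Proof.
  intros HB. induction k as [|k IH]; simpl.
  - now rewrite Rmult_1_l.
  - rewrite Rmult_assoc. now apply T4_delta_le.
Qed.

Lemma dist_PG_node q B s : delta_le d q B ->
  d (q (Int_part s)) (M (s - IZR (Int_part s)) (q (Int_part s)) (q (Int_part s + 1)%Z)) <= B.
Proof.
  intros HB. destruct (base_Int_part s).
  eapply Rle_trans; [apply dist_interpolant_le; lra | apply HB].
Qed.

Lemma dist_PG_refine_le k q q' B B' t :
  (forall n, q' (2 * n)%Z = q n) -> delta_le d q B -> delta_le d q' B' ->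
  d (PG M (S k) q' t) (PG M k q t) <= B + 2 * B'.
Proof.
  intros Hq' HB HB'. unfold PG.
  replace (2 ^ S k * t) with (2 * (2 ^ k * t)) by (simpl; ring).
  set (s := 2 ^ k * t). clearbody s.
  set (X := M (2 * s - _) _ _). set (Y := M (s - _) _ _).
  assert (HX : d X (q' (Int_part (2 * s))) <= B')
    by (rewrite dist_sym; now apply dist_PG_node).
  assert (HY : d (q (Int_part s)) Y <= B) by now apply dist_PG_node.
  assert (Hnodes : d (q' (Int_part (2 * s))) (q (Int_part s)) <= B').
  { destruct (Int_part_double s) as [-> | ->].
    - rewrite Hq', dist_xx. now apply (delta_le_ge0 q').
    - rewrite dist_sym, <- Hq'. apply HB'. }
  pose proof (dist_triangle X (q' (Int_part (2 * s))) Y).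
  pose proof (dist_triangle (q' (Int_part (2 * s))) (q (Int_part s)) Y).
  lra.
Qed.

Lemma dist_PG_Titer_succ_le p B k t : delta_le d p B ->
  d (PG M (S k) (Titer M omega (S k) p) t) (PG M k (Titer M omega k p) t)
  <= (1 + 2 * (4 * omega + 1/2)) * B * (4 * omega + 1/2) ^ k.
Proof.
  intros HB.
  pose proof (Titer_delta_le p B k HB) as Hk.
  eapply Rle_trans.
  - apply (dist_PG_refine_le k _ _ _ _ t (T4_even M omega _) Hk (T4_delta_le _ _ Hk)).
  - right. ring.
Qed.

End GeodesicAverage.

Section GeometricCauchy.
Context {A : Type} (u : nat -> A -> P) (C mu : R).
Hypotheses (HC : 0 <= C) (Hmu : 0 <= mu < 1).
Hypothesis Hstep : forall k t, d (u (S k) t) (u k t) <= C * mu ^ k.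

Lemma dist_geometric_tail k j t : d (u (k + j)%nat t) (u k t) <= C / (1 - mu) * mu ^ k.
Proof.
  assert (Hsum : d (u (k + j)%nat t) (u k t) <= C * (mu ^ k - mu ^ (k + j)) / (1 - mu)).
  { induction j as [|j IH].
    - rewrite Nat.add_0_r, dist_xx. right. field_simplify; lra.
    - replace (k + S j)%nat with (S (k + j)) by lia.
      pose proof (Hstep (k + j)%nat t).
      pose proof (dist_triangle (u (S (k + j)) t) (u (k + j)%nat t) (u k t)).
      replace (C * (mu ^ k - mu ^ S (k + j)) / (1 - mu))
        with (C * mu ^ (k + j) + C * (mu ^ k - mu ^ (k + j)) / (1 - mu))
        by (simpl; field; lra).
      lra. }
  assert (0 <= C / (1 - mu) * mu ^ (k + j))
    by (apply Rmult_le_pos; [apply Rle_mult_inv_pos|apply pow_le]; lra).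
  replace (C * (mu ^ k - mu ^ (k + j)) / (1 - mu))
    with (C / (1 - mu) * mu ^ k - C / (1 - mu) * mu ^ (k + j)) in Hsum by (field; lra).
  lra.
Qed.

Hypothesis Hcomplete : complete_metric d.

Lemma uniform_limit_of_geometric :
  exists g : A -> P, forall eps, eps > 0 -> exists K : nat,
    forall (k : nat) (t : A), (K <= k)%nat -> d (u k t) (g t) < eps.
Proof.
  assert (HD : 0 <= C / (1 - mu)) by (apply Rle_mult_inv_pos; lra).
  assert (Hlim : forall t, exists l, forall eps, eps > 0 -> exists N : nat,
             forall n : nat, (N <= n)%nat -> d (u n t) l < eps).
  { intros t. apply Hcomplete. intros eps Heps.
    destruct (geometric_eventually_lt mu _ eps Hmu HD Heps) as [N HN].
    exists N. intros m n Hm Hn.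
    destruct (Nat.le_ge_cases m n) as [Hmn | Hmn].
    - replace n with (m + (n - m))%nat by lia. rewrite dist_sym.
      pose proof (dist_geometric_tail m (n - m) t). pose proof (HN m Hm). lra.
    - replace m with (n + (m - n))%nat by lia.
      pose proof (dist_geometric_tail n (m - n) t). pose proof (HN n Hn). lra. }
  exists (fun t => proj1_sig (constructive_indefinite_description _ (Hlim t))).
  intros eps Heps.
  destruct (geometric_eventually_lt mu _ (eps / 2) Hmu HD ltac:(lra)) as [K HK].
  exists K. intros k t Hk.
  destruct (constructive_indefinite_description _ (Hlim t)) as [l Hl]. simpl.
  destruct (Hl (eps / 2) ltac:(lra)) as [N HN].
  pose proof (HN (k + N)%nat ltac:(lia)).
  pose proof (dist_geometric_tail k N t). pose proof (HK k Hk).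
  pose proof (dist_triangle (u k t) (u (k + N)%nat t) l) as Htri.
  rewrite (dist_sym (u k t) (u (k + N)%nat t)) in Htri. lra.
Qed.

End GeometricCauchy.

End Metric.

Theorem mainTheorem7 (P : Type) (d : P -> P -> R) (M : R -> P -> P -> P)
    (omega : R)
    (Hd : is_metric d) (Hcomplete : complete_metric d)
    (HM : geodesic_average d M omega) (Homega : 0 <= omega) :
  (forall (p : data P) (r : R), is_delta d p r ->
     exists r' : R, is_delta d (T4 M omega p) r' /\
                    r' <= (4 * omega + 1/2) * r) /\
  (omega < 1/8 -> 4 * omega + 1/2 < 1 /\ convergent d M omega).
Proof.
  split.
  - intros p r Hr.
    apply is_delta_exists_le, (T4_delta_le d Hd M omega HM Homega).
    now apply is_delta_delta_le.
  - intros Homega8. split; [lra|].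
    intros p [B HB].
    assert (HB0 : 0 <= B) by now apply (delta_le_ge0 d Hd p).
    apply (uniform_limit_of_geometric d Hd (fun k t => PG M k (Titer M omega k p) t)
             ((1 + 2 * (4 * omega + 1/2)) * B) (4 * omega + 1/2)); auto.
    + nra.
    + lra.
    + intros k t. now apply dist_PG_Titer_succ_le.
Qed.
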